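(* Suppose $p_1,p_2,p_3\in V$ have Gram matrix $\begin{pmatrix}1&t_1&t\\ t_1&1&t_2\overline\lambda\\ t&t_2\lambda&1\end{pmatrix}$ (i.e. $\langle p_i,p_j\rangle$ is the $(i,j)$ entry), where $t,t_1,t_2>1$, $|\lambda|=1$, $\lambda\ne1$. Put $m_1:=\frac{p_1-p_2}{\sqrt{2(t_1-1)}}$ and $m_2:=\frac{\lambda p_2-p_3}{\sqrt{2(t_2-1)}}$. Then $$\mathrm{Re}\frac{\langle p_1,m_2\rangle\langle m_1,m_1\rangle}{\langle m_1,m_2\rangle\langle p_1,m_1\rangle}=1+\frac{t^2-tt_1+t_1^2-(t_2-1)^2+tt_1(1-2\mathrm{Re}\lambda)}{(t_1+t_2-1)^2+t^2-2t(t_1+t_2-1)\mathrm{Re}\lambda},$$ $$\mathrm{tr}\big(R(m_2)R(m_1)R(p_1)\big)=2t(\overline\lambda-1)+\frac{2tt_1-t-t_1+1-2t_2}{t_1-1}-\frac{t^2-tt_1+t_1^2-(t_2-1)^2+t(t_1+t_2-1)(1-2\mathrm{Re}\lambda)}{(t_1-1)(t_2-1)}.$$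
   Context: $V$ is a $3$-dimensional complex vector space with a hermitian form $\langle-,-\rangle$ (linear in the first argument) of signature $++-$. For nonisotropic $p\in V$, $R(p)$ is the linear map $x\mapsto 2\frac{\langle x,p\rangle}{\langle p,p\rangle}p-x$. *)

From HB Require Import structures.
From mathcomp Require Import all_boot all_order all_algebra.
From mathcomp Require Import reals.
From mathcomp Require Import complex.
Set Implicit Arguments. Unset Strict Implicit. Unset Printing Implicit Defensive.
Import Order.TTheory GRing.Theory Num.Theory ComplexField.
Local Open Scope ring_scope.
Local Open Scope complex_scope.

(* V = C^3 as row vectors; the hermitian form <x,y> = x H y^* (linear in x). *)
Definition hform (R : rcfType) (H : 'M[R[i]]_3) (x y : 'rV[R[i]]_3) : R[i] :=
  (x *m H *m (map_mx conjc y)^T) 0 0.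

Definition sig_pp_m (R : rcfType) (H : 'M[R[i]]_3) : Prop :=
  H = (map_mx conjc H)^T /\
  exists P : 'M[R[i]]_3, P \in unitmx /\
    P *m H *m (map_mx conjc P)^T = diag_mx (\row_(k < 3) (if k == 2%N :> nat then -1 else 1)).

Definition refl (R : rcfType) (H : 'M[R[i]]_3) (p : 'rV[R[i]]_3) (x : 'rV[R[i]]_3) : 'rV[R[i]]_3 :=
  (2 * hform H x p / hform H p p) *: p - x.

From HB Require Import structures.
From mathcomp Require Import all_boot all_order all_algebra.
From mathcomp Require Import reals complex.
From mathcomp Require Import ring.
Import Order.TTheory GRing.Theory Num.Theory ComplexField.
Local Open Scope ring_scope.
Local Open Scope complex_scope.

(* Both quantities are unchanged when m1 and m2 are replaced by the
   unnormalised vectors q2 = p1 - p2 and q3 = lam p2 - p3: the ratio is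
   homogeneous of degree 0 in each of them, and R(c q) = R(q).  A composite of
   three reflections is -1 plus three rank-one maps x |-> <x,q_i> v_i, so its
   trace is a polynomial in the Gram entries of the three mirrors.  Both
   identities thereby become rational identities in t, t1, t2 and lam, valid
   modulo |lam| = 1, i.e. modulo lam^* = 2 Re lam - lam and
   lam^2 = 2 Re lam * lam - 1. *)

Section Hform.
Variables (R : rcfType) (H : 'M[R[i]]_3).
Implicit Types (x y z : 'rV[R[i]]_3) (a : R[i]).

Lemma hformDl x y z : hform H (x + y) z = hform H x z + hform H y z.
Proof. by rewrite /hform !mulmxDl mxE. Qed.

Lemma hformZl a x z : hform H (a *: x) z = a * hform H x z.
Proof. by rewrite /hform -!scalemxAl mxE. Qed.

Lemma hformBl x y z : hform H (x - y) z = hform H x z - hform H y z.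
Proof. by rewrite hformDl -scaleN1r hformZl mulN1r. Qed.

Lemma hformDr x y z : hform H x (y + z) = hform H x y + hform H x z.
Proof. by rewrite /hform map_mxD linearD /= mulmxDr mxE. Qed.

Lemma hformZr a x z : hform H x (a *: z) = a^* * hform H x z.
Proof. by rewrite /hform map_mxZ linearZ /= -scalemxAr mxE. Qed.

Lemma hformBr x y z : hform H x (y - z) = hform H x y - hform H x z.
Proof. by rewrite hformDr -scaleN1r hformZr rmorphN1 mulN1r. Qed.

Lemma hform_sum_delta x y :
  \sum_(i < 3) hform H (delta_mx 0 i) y * x 0 i = hform H x y.
Proof.
rewrite /hform -[in RHS]mulmxA [in RHS]mxE; apply: eq_bigr => i _.
by rewrite -mulmxA -rowE mxE mulrC.
Qed.

Lemma mxtrace_lin1_hform_sum (s : seq ('rV[R[i]]_3 * 'rV[R[i]]_3))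
    (f : 'rV[R[i]]_3 -> 'rV[R[i]]_3) :
  (forall x, f x = \sum_(yz <- s) hform H x yz.1 *: yz.2 - x) ->
  \tr (lin1_mx f) = \sum_(yz <- s) hform H yz.2 yz.1 - 3%:R.
Proof.
move=> def_f; rewrite /mxtrace.
under eq_bigr => i _ do rewrite mxE def_f !mxE summxE eqxx.
rewrite sumrB exchange_big /=; congr (_ - _).
  apply: eq_bigr => yz _; rewrite -hform_sum_delta.
  by apply: eq_bigr => i _; rewrite !mxE.
by rewrite (eq_bigr (fun=> 1)) ?sumr_const ?card_ord // => i _; rewrite eqxx.
Qed.

Lemma reflZ a q x : a != 0 -> refl H (a *: q) x = refl H q x.
Proof.
move=> a0; rewrite /refl !(hformZl, hformZr) scalerA; congr (_ *: q - x).
have [->|qq0] := eqVneq (hform H q q) 0; first by rewrite !(mulr0, invr0, mul0r).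
by field; rewrite qq0 a0 conjc_eq0 a0.
Qed.

Lemma hform_ratioZ a b p x y : a != 0 -> b != 0 ->
  hform H p (b *: y) * hform H (a *: x) (a *: x)
    / (hform H (a *: x) (b *: y) * hform H p (a *: x)) =
  hform H p y * hform H x x / (hform H x y * hform H p x).
Proof.
move=> a0 b0; rewrite !(hformZl, hformZr).
have [->|xy0] := eqVneq (hform H x y) 0; first by rewrite !(mulr0, mul0r, invr0).
have [->|px0] := eqVneq (hform H p x) 0; first by rewrite !(mulr0, mul0r, invr0).
by field; rewrite xy0 px0 a0 !conjc_eq0 a0 b0.
Qed.

Lemma mxtrace_refl3 q1 q2 q3 :
    hform H q1 q1 != 0 -> hform H q2 q2 != 0 -> hform H q3 q3 != 0 ->
  let c1 := 2 / hform H q1 q1 in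
  let c2 := 2 / hform H q2 q2 in
  let c3 := 2 / hform H q3 q3 in
  \tr (lin1_mx (refl H q3 \o refl H q2 \o refl H q1)) =
    3%:R - c1 * c2 * hform H q1 q2 * hform H q2 q1
         - c1 * c3 * hform H q1 q3 * hform H q3 q1
         - c2 * c3 * hform H q2 q3 * hform H q3 q2
         + c1 * c2 * c3 * hform H q1 q2 * hform H q2 q3 * hform H q3 q1.
Proof.
move=> n1 n2 n3 c1 c2 c3.
pose v1 := c1 *: q1 - (c1 * c2 * hform H q1 q2) *: q2
  - (c1 * c3 * hform H q1 q3) *: q3
  + (c1 * c2 * c3 * hform H q1 q2 * hform H q2 q3) *: q3.
pose v2 := c2 *: q2 - (c2 * c3 * hform H q2 q3) *: q3.
rewrite (@mxtrace_lin1_hform_sum [:: (q1, v1); (q2, v2); (q3, c3 *: q3)]).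
  rewrite !big_cons big_nil /= /v1 /v2 !(hformBl, hformZl, hformDl).
  by rewrite /c1 /c2 /c3; field; rewrite n1 n2 n3.
move=> x; rewrite !big_cons big_nil /= /refl !(hformBl, hformZl, hformDl).
by apply/rowP => j; rewrite !mxE /c1 /c2 /c3; ring.
Qed.

End Hform.

Section ComplexFacts.
Context {R : rcfType}.
Implicit Types x y : R[i].

Lemma conjCM x y : (x * y)^*%R = x^*%R * y^*%R.
Proof. exact: rmorphM. Qed.

Lemma conjCB x y : (x - y)^*%R = x^*%R - y^*%R.
Proof. exact: rmorphB. Qed.

Lemma conjCV x : (x^-1)^*%R = (x^*%R)^-1.
Proof. exact: fmorphV. Qed.

Lemma conjC_realC (a : R) : (a%:C)^*%R = a%:C.
Proof. exact: conjc_real. Qed.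

Lemma realC_subr_neq0 (a b : R) : a != b -> a%:C - b%:C != 0.
Proof. by rewrite subr_eq0 (inj_eq (@complexI R)). Qed.

Lemma conjC_Re x : x^*%R = 2 * (complex.Re x)%:C - x.
Proof. by rewrite ReJ_add mulrC divfK ?pnatr_eq0 // addrC addKr. Qed.

End ComplexFacts.

Section Unimodular.
Context {R : rcfType} {lam : R[i]}.
Hypotheses (lam_norm1 : `|lam| = 1) (lam_neq1 : lam != 1).

Lemma norm1_mulC : lam * lam^*%R = 1.
Proof. by rewrite -normCK lam_norm1 expr1n. Qed.

Lemma norm1_sqr : lam ^+ 2 = 2 * (complex.Re lam)%:C * lam - 1.
Proof. by rewrite -[X in _ - X]norm1_mulC conjC_Re; ring. Qed.

Context {a b : R}.
Hypotheses (a_gt0 : 0 < a) (b_gt0 : 0 < b).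

Lemma norm1_mulr_subr_neq0 : lam * a%:C - b%:C != 0.
Proof.
apply: contra lam_neq1; rewrite subr_eq0 => /eqP E.
have /eqP : `|a%:C| = `|b%:C| :> R[i] by rewrite -E normrM lam_norm1 mul1r.
rewrite !ger0_norm ?lecR ?ltW // => /eqP ab; rewrite -ab in E.
have a_neq0 : a%:C != 0 :> R[i] by rewrite (inj_eq (@complexI R)) gt_eqF.
by apply/eqP; apply: (mulIf a_neq0); rewrite mul1r.
Qed.

Lemma norm1_conjC_mulr_subr_neq0 : lam^*%R * a%:C - b%:C != 0.
Proof.
by rewrite -conjC_eq0 conjCB conjCM conjCK !conjC_realC norm1_mulr_subr_neq0.
Qed.

Lemma norm1_sqr_neq0 :
  a%:C ^+ 2 + b%:C ^+ 2 - 2 * b%:C * a%:C * (complex.Re lam)%:C != 0.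
Proof.
rewrite (_ : _ - _ = (lam * a%:C - b%:C) * (lam^*%R * a%:C - b%:C)).
  by rewrite mulf_neq0 // (norm1_mulr_subr_neq0, norm1_conjC_mulr_subr_neq0).
by rewrite [in RHS]conjC_Re; ring: norm1_sqr.
Qed.

End Unimodular.

Section Configuration.
Variables (R : rcfType) (H : 'M[R[i]]_3) (p1 p2 p3 : 'rV[R[i]]_3).
Variables (t t1 t2 : R) (lam : R[i]).
Hypotheses (t_gt1 : 1 < t) (t1_gt1 : 1 < t1) (t2_gt1 : 1 < t2).
Hypotheses (lam_norm1 : `|lam| = 1) (lam_neq1 : lam != 1).
Hypotheses (h11 : hform H p1 p1 = 1) (h12 : hform H p1 p2 = t1%:C)
  (h13 : hform H p1 p3 = t%:C) (h21 : hform H p2 p1 = t1%:C)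
  (h22 : hform H p2 p2 = 1) (h23 : hform H p2 p3 = t2%:C * lam^*)
  (h31 : hform H p3 p1 = t%:C) (h32 : hform H p3 p2 = t2%:C * lam)
  (h33 : hform H p3 p3 = 1).

(* The mirrors m1 and m2 of the theorem are positive real multiples of these. *)
Let q2 := p1 - p2.
Let q3 := lam *: p2 - p3.

Lemma hform_p1_q2 : hform H p1 q2 = 1 - t1%:C.
Proof. by rewrite hformBr h11 h12. Qed.

Lemma hform_q2_p1 : hform H q2 p1 = 1 - t1%:C.
Proof. by rewrite hformBl h11 h21. Qed.

Lemma hform_q2_q2 : hform H q2 q2 = 2 * (1 - t1%:C).
Proof. by rewrite !(hformBl, hformBr) h11 h12 h21 h22; ring. Qed.

Lemma hform_p1_q3 : hform H p1 q3 = lam^* * t1%:C - t%:C.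
Proof. by rewrite hformBr hformZr h12 h13. Qed.

Lemma hform_q3_p1 : hform H q3 p1 = lam * t1%:C - t%:C.
Proof. by rewrite hformBl hformZl h21 h31. Qed.

Lemma realC_t1_t2_sub1 : (t1 + t2 - 1)%:C = t1%:C + t2%:C - 1.
Proof. by rewrite rmorphB rmorphD rmorph1. Qed.

Lemma hform_q2_q3 : hform H q2 q3 = lam^* * (t1 + t2 - 1)%:C - t%:C.
Proof.
by rewrite !(hformBl, hformBr, hformZr) h12 h13 h22 h23 realC_t1_t2_sub1; ring.
Qed.

Lemma hform_q3_q2 : hform H q3 q2 = lam * (t1 + t2 - 1)%:C - t%:C.
Proof.
by rewrite !(hformBl, hformBr, hformZl) h21 h22 h31 h32 realC_t1_t2_sub1; ring.
Qed.

Lemma hform_q3_q3 : hform H q3 q3 = 2 * (1 - t2%:C).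
Proof.
rewrite !(hformBl, hformBr, hformZl, hformZr) h22 h23 h32 h33.
by ring: (norm1_mulC lam_norm1).
Qed.

Lemma t1C_sub1_neq0 : t1%:C - 1 != 0.
Proof. by apply: realC_subr_neq0; rewrite gt_eqF. Qed.

Lemma t2C_sub1_neq0 : t2%:C - 1 != 0.
Proof. by apply: realC_subr_neq0; rewrite gt_eqF. Qed.

Lemma hform_q2_q2_neq0 : hform H q2 q2 != 0.
Proof. by rewrite hform_q2_q2 mulf_neq0 ?pnatr_eq0 // -opprB oppr_eq0 t1C_sub1_neq0. Qed.

Lemma hform_q3_q3_neq0 : hform H q3 q3 != 0.
Proof. by rewrite hform_q3_q3 mulf_neq0 ?pnatr_eq0 // -opprB oppr_eq0 t2C_sub1_neq0. Qed.

Lemma t1_t2_sub1_gt0 : 0 < t1 + t2 - 1.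
Proof. by rewrite -addrA addr_gt0 ?subr_gt0 // (lt_trans ltr01). Qed.

Lemma Re_hform_ratio :
  complex.Re (hform H p1 q3 * hform H q2 q2 / (hform H q2 q3 * hform H p1 q2)) =
    1 + (t ^+ 2 - t * t1 + t1 ^+ 2 - (t2 - 1) ^+ 2
         + t * t1 * (1 - 2 * complex.Re lam)) /
        ((t1 + t2 - 1) ^+ 2 + t ^+ 2 - 2 * t * (t1 + t2 - 1) * complex.Re lam).
Proof.
have t_gt0 : 0 < t by rewrite (lt_trans ltr01).
have := norm1_mulr_subr_neq0 lam_norm1 lam_neq1 t1_t2_sub1_gt0 t_gt0.
have := norm1_conjC_mulr_subr_neq0 lam_norm1 lam_neq1 t1_t2_sub1_gt0 t_gt0.
have := norm1_sqr_neq0 lam_norm1 lam_neq1 t1_t2_sub1_gt0 t_gt0.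
(* [field] pushes [%:C] through sums, so its side conditions are stated with
   [t1%:C + t2%:C - 1]. *)
rewrite !realC_t1_t2_sub1 => D_neq0 conj_den_neq0 den_neq0.
rewrite hform_p1_q3 hform_q2_q2 hform_q2_q3 hform_p1_q2.
(* [ReJ_add] is stated with complex.v's [conjc]; the rules below use [Num.conj]. *)
apply: (@complexI R); rewrite ReJ_add -[conjc _]/(Num.conj _).
rewrite !(conjCM, conjCB, conjCV, conjC_realC, conjC_nat, conjC1, conjCK).
field: (conjC_Re lam) (norm1_sqr lam_norm1).
by rewrite D_neq0 -opprB oppr_eq0 t1C_sub1_neq0 den_neq0 conj_den_neq0.
Qed.

Lemma mxtrace_refl_p1_q2_q3 :
  \tr (lin1_mx (refl H q3 \o refl H q2 \o refl H p1)) =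
    2 * t%:C * (lam^* - 1)
    + ((2 * t * t1 - t - t1 + 1 - 2 * t2) / (t1 - 1))%:C
    - ((t ^+ 2 - t * t1 + t1 ^+ 2 - (t2 - 1) ^+ 2
        + t * (t1 + t2 - 1) * (1 - 2 * complex.Re lam))
        / ((t1 - 1) * (t2 - 1)))%:C.
Proof.
rewrite mxtrace_refl3 ?hform_q2_q2_neq0 ?hform_q3_q3_neq0 ?h11 ?oner_eq0 //.
rewrite hform_q2_q2 hform_q3_q3 hform_p1_q2 hform_q2_p1.
rewrite hform_p1_q3 hform_q3_p1 hform_q2_q3 hform_q3_q2.
field: (conjC_Re lam) (norm1_sqr lam_norm1).
by rewrite -(opprB t1%:C) -(opprB t2%:C) !oppr_eq0 t1C_sub1_neq0 t2C_sub1_neq0.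
Qed.

End Configuration.

Lemma realC_invsqrt_neq0 (R : rcfType) (x : R) :
  0 < x -> (Num.sqrt x)^-1%:C != 0 :> R[i].
Proof. by move=> x_gt0; rewrite (inj_eq (@complexI R)) invr_eq0 gt_eqF ?sqrtr_gt0. Qed.

Theorem lemma4p4 (R : realType) (H : 'M[R[i]]_3) (p1 p2 p3 : 'rV[R[i]]_3)
  (t t1 t2 : R) (lam : R[i]) :
  sig_pp_m H ->
  1 < t -> 1 < t1 -> 1 < t2 -> `|lam| = 1 -> lam != 1 ->
  hform H p1 p1 = 1 -> hform H p1 p2 = t1%:C -> hform H p1 p3 = t%:C ->
  hform H p2 p1 = t1%:C -> hform H p2 p2 = 1 -> hform H p2 p3 = t2%:C * lam^* ->
  hform H p3 p1 = t%:C -> hform H p3 p2 = t2%:C * lam -> hform H p3 p3 = 1 ->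
  let m1 := (Num.sqrt (2 * (t1 - 1)))^-1%:C *: (p1 - p2) in
  let m2 := (Num.sqrt (2 * (t2 - 1)))^-1%:C *: (lam *: p2 - p3) in
  let rl := complex.Re lam in
  complex.Re (hform H p1 m2 * hform H m1 m1 / (hform H m1 m2 * hform H p1 m1)) =
    1 + (t ^+ 2 - t * t1 + t1 ^+ 2 - (t2 - 1) ^+ 2 + t * t1 * (1 - 2 * rl)) /
        ((t1 + t2 - 1) ^+ 2 + t ^+ 2 - 2 * t * (t1 + t2 - 1) * rl)
  /\
  \tr (lin1_mx (refl H m2 \o refl H m1 \o refl H p1)) =
    2 * t%:C * (lam^* - 1)
    + ((2 * t * t1 - t - t1 + 1 - 2 * t2) / (t1 - 1))%:C
    - ((t ^+ 2 - t * t1 + t1 ^+ 2 - (t2 - 1) ^+ 2 + t * (t1 + t2 - 1) * (1 - 2 * rl))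
        / ((t1 - 1) * (t2 - 1)))%:C.
Proof.
move=> _ t_gt1 t1_gt1 t2_gt1 lam_norm1 lam_neq1.
move=> h11 h12 h13 h21 h22 h23 h31 h32 h33 m1 m2 rl.
have u1_neq0 : (Num.sqrt (2 * (t1 - 1)))^-1%:C != 0 :> R[i].
  by rewrite realC_invsqrt_neq0 // mulr_gt0 // subr_gt0.
have u2_neq0 : (Num.sqrt (2 * (t2 - 1)))^-1%:C != 0 :> R[i].
  by rewrite realC_invsqrt_neq0 // mulr_gt0 // subr_gt0.
split.
  by rewrite /m1 /m2 hform_ratioZ //; apply: Re_hform_ratio.
rewrite (_ : lin1_mx _ =
  lin1_mx (refl H (lam *: p2 - p3) \o refl H (p1 - p2) \o refl H p1)).
  by apply: mxtrace_refl_p1_q2_q3.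
by apply/matrixP => i j; rewrite mxE [RHS]mxE /= /m1 /m2 !reflZ.
Qed.
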